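(* Let $\sigma>0$, $\lambda>0$, $\nu\in(0,\pi/2)$ and $\kappa_1\in(0,1)$. Then there exists $\hat\varepsilon=\hat\varepsilon(\lambda,\nu)>0$ such that for any $\varepsilon\in(0,\hat\varepsilon)$ there exists $\delta_\varepsilon\in(0,\kappa_1)$ with the following property: for any $\kappa\in(0,\delta_\varepsilon]$, the solution $(x(t),y(t))$ of \[ x'=y,\qquad y'=-\lambda a^+(t)g(x) \] with $x(0)=\kappa$, $y(0)=0$ satisfies \[ -\nu\le\arctan\Bigl(\frac{y(t)}{x(t)}\Bigr)\le0\quad\text{for all }t\in[0,\sigma]. \]
   Context: $a\in L^1(0,\sigma)$ with positive part $a^+$. $g\colon\mathbb{R}\to[0,+\infty)$ is the extension by zero outside $[0,1]$ of a locally Lipschitz continuous function $g\colon[0,1]\to[0,+\infty)$ with $g(0)=g(1)=0$, $g(s)>0$ for $0<s<1$ and $\lim_{s\to0^+}g(s)/s=0$. Solutions are in the Carathéodory sense on $[0,\sigma]$. *)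

From HB Require Import structures.
From mathcomp Require Import all_boot all_order all_algebra.
From mathcomp Require Import all_classical all_reals all_analysis.
Set Implicit Arguments. Unset Strict Implicit. Unset Printing Implicit Defensive.
Import Order.TTheory GRing.Theory Num.Theory.
Import numFieldNormedType.Exports.
Local Open Scope classical_set_scope.
Local Open Scope ring_scope.

Definition pospart {R : realType} (a : R -> R) : R -> R :=
  fun t => Num.max (a t) 0.

Definition locally_lipschitz_on01 {R : realType} (g : R -> R) : Prop :=
  forall s, 0 <= s <= 1 -> exists r : R, exists L : R, 0 < r /\
    forall u v, 0 <= u <= 1 -> 0 <= v <= 1 -> `|u - s| < r -> `|v - s| < r ->
      `|g u - g v| <= L * `|u - v|.

Definition admissible_g {R : realType} (g : R -> R) : Prop :=
  locally_lipschitz_on01 g /\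
  [/\ (forall s, 0 <= s <= 1 -> 0 <= g s),
      (forall s, (s < 0) || (1 < s) -> g s = 0),
      g 0 = 0 /\ g 1 = 0,
      (forall s, 0 < s < 1 -> 0 < g s) &
      (fun s => g s / s) @ 0^'+ --> (0 : R)].

(* Caratheodory solution on [0,sigma] of x' = y, y' = - lam a^+(t) g(x),
   x(0) = x0, y(0) = y0, written in the equivalent integral form:
   y and t |-> a^+(t) g(x(t)) are Lebesgue integrable on [0,sigma] and
   x, y are the corresponding indefinite integrals. *)
Definition caratheodory_solution {R : realType} (lam : R) (a g : R -> R)
    (sigma x0 y0 : R) (x y : R -> R) : Prop :=
  [/\ (@lebesgue_measure R).-integrable `[0, sigma] (EFin \o y),
      (@lebesgue_measure R).-integrable `[0, sigma]
         (EFin \o (fun s => pospart a s * g (x s))) &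
      forall t, 0 <= t <= sigma ->
        x t = x0 + Rintegral (@lebesgue_measure R) `[0, t] y /\
        y t = y0 - lam * Rintegral (@lebesgue_measure R) `[0, t]
                         (fun s => pospart a s * g (x s))].

From HB Require Import structures.
From mathcomp Require Import all_boot all_order all_algebra.
From mathcomp Require Import all_classical all_reals all_analysis.
Import Order.TTheory GRing.Theory Num.Theory.
Import numFieldNormedType.Exports.
Local Open Scope classical_set_scope.
Local Open Scope ring_scope.
From mathcomp Require Import ring lra.

(* Since y' = -lam a^+ g(x) <= 0, the solution satisfies y <= 0 and x <= kappa.
   As g(s) = o(s) at 0+, for kappa small enough g(x) <= eta kappa along the
   solution, so -y <= K kappa on [0, sigma] with K = lam eta ||a||_1, and then
   x >= kappa - sigma K kappa.  Choosing eta with 2 K sigma <= 1 and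
   2 K <= tan nu gives x >= kappa / 2 and -y <= tan nu * x, which places
   atan (y / x) in [-nu, 0]. *)

Lemma pospart_ge0 {R : realType} (a : R -> R) u : 0 <= pospart a u.
Proof. by rewrite /pospart le_max lexx orbT. Qed.

Lemma pospart_le_norm {R : realType} (a : R -> R) u : pospart a u <= `|a u|.
Proof. by rewrite /pospart ge_max normr_ge0 ler_norm. Qed.

Section Rintegral_itv0.
Context {R : realType}.
Notation mu := (@lebesgue_measure R).
Implicit Types (a f : R -> R) (c s t : R).

Lemma integrable_itv_cst (u v c : R) : mu.-integrable `[u, v] (EFin \o cst c).
Proof.
apply: continuous_compact_integrable; first exact: segment_compact.
exact/continuous_subspaceT/cst_continuous.
Qed.

Lemma Rintegral_itv0_cst t c : 0 <= t -> \int[mu]_(_ in `[0, t]) c = c * t.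
Proof.
move=> t_ge0; have mu_t : fine (mu `[0, t]) = t.
  rewrite (@lebesgue_measure_itv R `[0, t]%R) /=.
  have [t_gt0|t_le0] := ltP 0 t; first by rewrite lte_fin t_gt0 /= subr0.
  have -> : t = 0 by apply/le_anti; rewrite t_le0 t_ge0.
  by rewrite ltxx.
by rewrite Rintegral_cst // mu_t.
Qed.

Lemma Rintegral_itv0_ge {t f c} : 0 <= t -> mu.-integrable `[0, t] (EFin \o f) ->
  (forall s, 0 <= s <= t -> c <= f s) -> c * t <= \int[mu]_(s in `[0, t]) f s.
Proof.
move=> t0 fi cf; rewrite -Rintegral_itv0_cst //.
exact: (le_Rintegral _ (integrable_itv_cst 0 t c) fi cf).
Qed.

Lemma Rintegral_itv0_le {t f c} : 0 <= t -> mu.-integrable `[0, t] (EFin \o f) ->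
  (forall s, 0 <= s <= t -> f s <= c) -> \int[mu]_(s in `[0, t]) f s <= c * t.
Proof.
move=> t0 fi fc; rewrite -Rintegral_itv0_cst //.
exact: (le_Rintegral _ fi (integrable_itv_cst 0 t c) fc).
Qed.

Lemma Rintegral_itv0_mono {t sigma f} : 0 <= t <= sigma ->
  mu.-integrable `[0, sigma] (EFin \o f) ->
  (forall s, 0 <= s <= sigma -> 0 <= f s) ->
  \int[mu]_(s in `[0, t]) f s <= \int[mu]_(s in `[0, sigma]) f s.
Proof.
move=> /andP[t0 ts] fi f0; rewrite -subr_ge0.
rewrite (@Rintegral_itvB R f (BLeft 0) (BRight sigma) t fi) ?bnd_simp //.
apply: Rintegral_ge0 => s /=; rewrite in_itv /= => /andP[t_lt_s s_le].
by apply: f0; rewrite s_le andbT (le_trans t0 (ltW t_lt_s)).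
Qed.

Lemma Rintegral_pospart_mul_le {sigma s a f c} : 0 <= s <= sigma ->
  mu.-integrable `[0, sigma] (EFin \o a) ->
  mu.-integrable `[0, sigma] (EFin \o (fun u => pospart a u * f u)) ->
  (forall u, 0 <= u <= sigma -> 0 <= f u <= c) ->
  \int[mu]_(u in `[0, s]) (pospart a u * f u) <=
  c * \int[mu]_(u in `[0, sigma]) `|a u|.
Proof.
move=> ss ai afi fc.
have absai : mu.-integrable `[0, sigma] (EFin \o (fun u => `|a u|)).
  by apply: eq_integrable (integrable_abse ai) => // u _.
have af_ge0 u : 0 <= u <= sigma -> 0 <= pospart a u * f u.
  by move=> /fc /andP[f0 _]; exact: mulr_ge0 (pospart_ge0 a u) f0.
apply: le_trans (Rintegral_itv0_mono ss afi af_ge0) _.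
rewrite -RintegralZl //; apply: le_Rintegral => //.
  by apply: eq_integrable (integrableZl _ c absai) => // u _.
move=> u /=; rewrite in_itv /= => /fc /andP[f0 fle].
by rewrite mulrC; exact: ler_pM f0 (pospart_ge0 a u) fle (pospart_le_norm a u).
Qed.

End Rintegral_itv0.

Section admissible_g.
Context {R : realType} {g : R -> R}.
Hypothesis gP : admissible_g g.

Lemma admissible_g_ge0 u : 0 <= g u.
Proof.
have [_ [g01 gout _ _ _]] := gP.
have [u0|u0] := ltP u 0; first by rewrite gout ?u0.
have [u1|u1] := leP u 1; first by rewrite g01 ?u0.
by rewrite gout ?u1 ?orbT.
Qed.

Lemma admissible_g_small eta : 0 < eta ->
  exists2 r, 0 < r & forall u k, 0 <= k < r -> u <= k -> g u <= eta * k.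
Proof.
have [_ [_ gout [g0 _] _ glim]] := gP.
move=> eta0; have /cvgrPdist_lt /(_ eta eta0) [r /= r0 near0] := glim.
exists r => // u k /andP[k0 kr] uk.
have etak_ge0 : 0 <= eta * k by rewrite mulr_ge0 // ltW.
have [u0|u0|->] := ltgtP u 0; [by rewrite gout ?u0 | | by rewrite g0].
have := near0 u; rewrite /= sub0r normrN gtr0_norm // => /(_ (le_lt_trans uk kr) u0).
rewrite sub0r normrN => /(le_lt_trans (ler_norm _)).
rewrite ltr_pdivrMr // => /ltW/le_trans; apply.
by rewrite ler_pM2l.
Qed.

End admissible_g.

Section pihalf.
Context {R : realType}.
Implicit Types nu : R.

Lemma pihalf_itv {nu} : 0 < nu < pi / 2 -> nu \in `](- (pi / 2)), (pi / 2)[.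
Proof.
move=> /andP[nu_gt0 nu_lt]; rewrite in_itv /= nu_lt andbT.
by rewrite (lt_trans _ nu_gt0) // oppr_lt0 divr_gt0 ?pi_gt0.
Qed.

Lemma tan_gt0_pihalf {nu} : 0 < nu < pi / 2 -> 0 < tan nu.
Proof.
move=> nuP; have := pihalf_itv nuP; rewrite in_itv /= => /andP[nu_gt nu_lt].
by rewrite divr_gt0 ?sin_gt0_pihalf ?cos_gt0_pihalf ?nuP ?nu_gt ?nu_lt.
Qed.

Lemma atan_div_bounds nu u v : 0 < nu < pi / 2 -> 0 < u ->
  - (tan nu * u) <= v <= 0 -> - nu <= atan (v / u) <= 0.
Proof.
move=> nuP u_gt0 /andP[v_ge v_le0]; apply/andP; split.
- rewrite -{1}(tanK (pihalf_itv nuP)) -atanN; apply: le_atan.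
  by rewrite ler_pdivlMr // mulNr.
- by rewrite -(atan0 R); apply: le_atan; rewrite ler_pdivrMr // mul0r.
Qed.

End pihalf.

Section solution_bounds.
Context {R : realType} {lam sigma kappa : R} {a g x y : R -> R}.
Hypotheses (lam_gt0 : 0 < lam) (g_ge0 : forall u, 0 <= g u).
Hypothesis sol : caratheodory_solution lam a g sigma kappa 0 x y.

Local Notation A := (\int[lebesgue_measure]_(u in `[0, sigma]) `|a u|).

Lemma solution_y_le0 s : 0 <= s <= sigma -> y s <= 0.
Proof.
have [_ _ eqs] := sol; move=> /eqs [_ ->].
rewrite sub0r oppr_le0; apply: mulr_ge0; first exact: ltW.
by apply: Rintegral_ge0 => u _; exact: mulr_ge0 (pospart_ge0 a u) (g_ge0 _).
Qed.

Lemma solution_y_integrable t : 0 <= t <= sigma ->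
  (@lebesgue_measure R).-integrable `[0, t] (EFin \o y).
Proof.
have [iy _ _] := sol; move=> /andP[_ tle].
by apply: integrableS iy => //; apply: subset_itvl; rewrite bnd_simp.
Qed.

Lemma solution_x_le s : 0 <= s <= sigma -> x s <= kappa.
Proof.
have [_ _ eqs] := sol; move=> ss; have /andP[s0 sle] := ss.
have y_le0 u : 0 <= u <= s -> y u <= 0.
  by move=> /andP[u0 us]; apply: solution_y_le0; rewrite u0 (le_trans us sle).
have [-> _] := eqs s ss; rewrite gerDl.
by have := Rintegral_itv0_le s0 (solution_y_integrable s ss) y_le0; rewrite mul0r.
Qed.

Lemma solution_y_ge c :
  (@lebesgue_measure R).-integrable `[0, sigma] (EFin \o a) ->
  (forall u, 0 <= u <= sigma -> g (x u) <= c) -> forall s, 0 <= s <= sigma ->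
  - (lam * c * A) <= y s.
Proof.
have [_ ih eqs] := sol; move=> ai gc s ss.
have gxc u : 0 <= u <= sigma -> 0 <= g (x u) <= c by move=> /gc ->; rewrite g_ge0.
have [_ ->] := eqs s ss; rewrite sub0r lerN2 -mulrA ler_pM2l //.
exact: Rintegral_pospart_mul_le ss ai ih gxc.
Qed.

Lemma solution_x_ge M : (forall s, 0 <= s <= sigma -> - M <= y s) ->
  forall t, 0 <= t <= sigma -> kappa - M * t <= x t.
Proof.
have [_ _ eqs] := sol; move=> yM t tt; have /andP[t0 tle] := tt.
have yM_t u : 0 <= u <= t -> - M <= y u.
  by move=> /andP[u0 ut]; apply: yM; rewrite u0 (le_trans ut tle).
have [-> _] := eqs t tt; rewrite lerD2l -mulNr.
exact: Rintegral_itv0_ge t0 (solution_y_integrable t tt) yM_t.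
Qed.

Lemma solution_in_sector nu eta :
  0 < nu < pi / 2 -> 0 < kappa -> 0 <= eta ->
  (@lebesgue_measure R).-integrable `[0, sigma] (EFin \o a) ->
  (forall u, 0 <= u <= sigma -> g (x u) <= eta * kappa) ->
  2 * (lam * eta * A) * sigma <= 1 -> 2 * (lam * eta * A) <= tan nu ->
  forall t, 0 <= t <= sigma -> x t != 0 /\ - nu <= atan (y t / x t) <= 0.
Proof.
move=> nuP kappa_gt0 eta_ge0 ai gx_le K_sigma K_tan t tt.
have := solution_y_ge _ ai gx_le; rewrite mulrA mulrAC.
set K := lam * eta * A in K_sigma K_tan * => y_ge.
have K_ge0 : 0 <= K by rewrite !mulr_ge0 ?(ltW lam_gt0) ?Rintegral_ge0.
have x_ge := solution_x_ge _ y_ge t tt.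
have y_le0 := solution_y_le0 t tt.
have /andP[t_ge0 t_le] := tt.
have Kt : K * t <= 1 / 2 by nra.
have x_half : kappa / 2 <= x t by nra.
split; first by rewrite gt_eqF //; lra.
apply: atan_div_bounds => //; first lra.
by rewrite y_le0 andbT; have := y_ge t tt; nra.
Qed.

End solution_bounds.

Theorem lemma2p3 (R : realType) (lam nu : R) :
  0 < lam -> 0 < nu < pi / 2 ->
  exists epshat : R, 0 < epshat /\
  forall (sigma kappa1 : R) (a g : R -> R),
    0 < sigma -> 0 < kappa1 < 1 ->
    (@lebesgue_measure R).-integrable `[0, sigma] (EFin \o a) ->
    admissible_g g ->
    forall eps : R, 0 < eps < epshat ->
    exists delta : R, 0 < delta < kappa1 /\
    forall kappa : R, 0 < kappa <= delta ->
    forall x y : R -> R,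
      caratheodory_solution lam a g sigma kappa 0 x y ->
      forall t, 0 <= t <= sigma ->
        x t != 0 /\ - nu <= atan (y t / x t) <= 0.
Proof.
move=> lam_gt0 nuP; have tan_nu_gt0 := tan_gt0_pihalf nuP.
exists 1; split => // sigma k1 a g sigma_gt0 /andP[k1_gt0 k1_lt1] ai gP _ _.
pose A := \int[lebesgue_measure]_(u in `[0, sigma]) `|a u|.
have A_ge0 : 0 <= A by apply: Rintegral_ge0.
pose c := Num.min (1 / (2 * sigma)) (tan nu / 2).
have c_gt0 : 0 < c by rewrite lt_min (divr_gt0 tan_nu_gt0) // andbT divr_gt0 ?mulr_gt0.
pose eta := c / (lam * (A + 1)).
have eta_gt0 : 0 < eta by rewrite divr_gt0 ?mulr_gt0 ?ltr_wpDl.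
have K_le_c : lam * eta * A <= c.
  have -> : lam * eta * A = c * (A / (A + 1)).
    by rewrite /eta; field; rewrite !gt_eqF ?ltr_wpDl.
  by rewrite ger_pMr // ler_pdivrMr ?ltr_wpDl // mul1r lerDl.
have c_sigma : c * (2 * sigma) <= 1 by rewrite -ler_pdivlMr ?mulr_gt0 // ge_min lexx.
have c_tan : c <= tan nu / 2 by rewrite ge_min lexx orbT.
have K_sigma : 2 * (lam * eta * A) * sigma <= 1 by nra.
have K_tan : 2 * (lam * eta * A) <= tan nu by lra.
have [r r_gt0 g_small] := admissible_g_small gP _ eta_gt0.
exists (Num.min (r / 2) (k1 / 2)); split.
  by rewrite lt_min !divr_gt0 //= gt_min; apply/orP; right; lra.
move=> kappa /andP[kappa_gt0]; rewrite le_min => /andP[kappa_r _] x y sol.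
have kappa_small : 0 <= kappa < r by apply/andP; split; lra.
have g_ge0 := admissible_g_ge0 gP.
apply: (solution_in_sector lam_gt0 g_ge0 sol _ _ nuP kappa_gt0 (ltW eta_gt0) ai) => //.
by move=> u /(solution_x_le lam_gt0 g_ge0 sol u); apply: g_small.
Qed.
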